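(* Let $(V,S)$ be a pair of adapted processes $V=(V_t)_{t\in\mathbb{T}}$, $S=(S_t)_{t\in\mathbb{T}\cup\{T\}}$ satisfying properties (i)–(iii) below. Then for every $t\in\mathbb{T}$, on the set $\{t<T_e\}\cap\{V_t>G_t\}$ we have $S_t=E[S_{t+1}\mid\mathcal{F}_t]$ and $S_tV_t=E[S_{t+1}V_{t+1}\mid\mathcal{F}_t]$. (i) $0<S_t\le1$ on $D_t$ and $S_t=0$ on $D_t^c$ for all $t\in\mathbb{T}$, and $V_t=G_t$ on $\{t\ge T_e\}$. (ii) Given $S$, $V$ is the smallest adapted process which dominates $G$ and renders the stopped process $(S_{t\wedge T_e}V_{t\wedge T_e})_{t\in\mathbb{T}}$ a supermartingale. (iii) Given $V$, $S$ is the smallest nonnegative supermartingale on $\mathbb{T}\cup\{T\}$ satisfying $S_t=1$ on $D_t\cap\{V_t=G_t\}$ for all $t\in\mathbb{T}$, and $S_\infty=1_{\{\sigma=\infty\}}$ if $T=\infty$.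
   Context: Let $T\in\mathbb{N}\cup\{\infty\}$, $\mathbb{T}=\{0,\dots,T\}$ if $T<\infty$ and $\mathbb{T}=\{0,1,2,\dots\}$ if $T=\infty$ (supermartingale properties are understood on $\mathbb{T}$ unless stated otherwise). Let $(\Omega,\mathcal{F},P)$ be a probability space with filtration $(\mathcal{F}_t)_{t\le T}$, $\mathcal{F}_0$ trivial. Let $\sigma$ be a stopping time with values in $\{0,1,\dots\}\cup\{\infty\}$, $P(\sigma>0)=1$; $D_t=\{t<\sigma\}$, $D_\infty=\{\sigma=\infty\}$. Let $G=(G_t)_{t\in\mathbb{T}\cup\{T\}}$ be adapted, with $G_t=\Delta$ on $D_t^c$ ($\Delta$ an auxiliary symbol with $0\cdot\Delta=0$), $E[\sup_{t\le T}|G_t|1_{D_t}]<\infty$, and if $T=\infty$, $G_\infty=\limsup_{t\to\infty}G_t$. Effective horizon: $T_e=T\wedge\inf\{0\le t<T:P(D_{t+1}\mid\mathcal{F}_t)=0\}$, with $\inf\emptyset=\infty$. *)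

From HB Require Import structures.
From mathcomp Require Import all_boot all_order all_algebra.
From mathcomp Require Import all_classical all_reals all_analysis.

Set Implicit Arguments.
Unset Strict Implicit.
Unset Printing Implicit Defensive.
Import Order.TTheory GRing.Theory Num.Theory.
Local Open Scope classical_set_scope.
Local Open Scope ring_scope.

(* Extended naturals N u {oo}: [Some n] = n, [None] = oo. *)
Definition enat := option nat.

(* t <= T  (t in the index set T = {0..T} or N) *)
Definition inT (T : enat) (t : nat) : Prop :=
  match T with Some n => (t <= n)%N | None => True end.
Definition ltT (t : nat) (T : enat) : Prop :=
  match T with Some n => (t < n)%N | None => True end.
Definition leT (e : enat) (t : nat) : Prop :=
  match e with Some n => (n <= t)%N | None => False end.
Definition tmin (t : nat) (e : enat) : nat :=
  match e with Some n => minn t n | None => t end.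

Section Defs.
Context {d : measure_display} {Omega : measurableType d} {R : realType}.
Variable P : probability Omega R.

Definition Fmeas (F : set (set Omega)) (X : Omega -> R) : Prop :=
  forall B : set R, measurable B -> F (X @^-1` B).

(* X is F-measurable on the set D (used for processes taking the cemetery
   value Delta outside D) *)
Definition Fmeas_on (F : set (set Omega)) (D : set Omega) (X : Omega -> R) : Prop :=
  forall B : set R, measurable B -> F (D `&` X @^-1` B).

Definition cond_exp_version (F : set (set Omega)) (X Y : Omega -> R) : Prop :=
  Fmeas F Y /\ P.-integrable setT (EFin \o Y) /\
  forall A, F A -> (\int[P]_(w in A) (Y w)%:E = \int[P]_(w in A) (X w)%:E)%E.

Definition filtration (T : enat) (F : nat -> set (set Omega)) : Prop :=
  (forall t, inT T t -> sigma_algebra setT (F t) /\ F t `<=` measurable) /\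
  (forall s t, (s <= t)%N -> inT T t -> F s `<=` F t) /\
  (forall A, F 0%N A -> A = set0 \/ A = setT).

Definition Finf (F : nat -> set (set Omega)) : set (set Omega) :=
  smallest (sigma_algebra setT) (\bigcup_(t in [set: nat]) F t).

Definition stopping_time (T : enat) (F : nat -> set (set Omega))
    (sigma : Omega -> enat) : Prop :=
  forall t, inT T t -> F t [set w | leT (sigma w) t].

Definition Dset (sigma : Omega -> enat) (t : nat) : set Omega :=
  [set w | ltT t (sigma w)].

Definition supermart (T : enat) (F : nat -> set (set Omega))
    (X : nat -> Omega -> R) : Prop :=
  (forall t, inT T t -> Fmeas (F t) (X t) /\ P.-integrable setT (EFin \o X t)) /\
  (forall s t, (s <= t)%N -> inT T t ->
     forall Y, cond_exp_version (F s) (X t) Y ->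
       {ae P, forall w, Y w <= X s w}).

(* supermartingale on the time set T u {T}: a process (X, Xinf), where Xinf
   is the value at time oo, only relevant when T = oo (T = None). *)
Definition supermart_ext (T : enat) (F : nat -> set (set Omega))
    (X : nat -> Omega -> R) (Xinf : Omega -> R) : Prop :=
  supermart T F X /\
  (T = None ->
     Fmeas (Finf F) Xinf /\ P.-integrable setT (EFin \o Xinf) /\
     forall s, forall Y, cond_exp_version (F s) Xinf Y ->
       {ae P, forall w, Y w <= X s w}).

(* effective horizon T_e = T /\ inf {0 <= t < T : p t = 0}, where p t is a
   (fixed) version of P(D_{t+1} | F_t) *)
Definition eff_horizon (T : enat) (p : nat -> Omega -> R) (w : Omega) : enat :=
  let Q := fun s => `[< ltT s T /\ p s w = 0 >] in
  match pselect (exists s, Q s) with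
  | left h => Some (ex_minn h)
  | right _ => T
  end.

Definition stopped (X : nat -> Omega -> R) (tau : Omega -> enat) :
    nat -> Omega -> R :=
  fun t w => X (tmin t (tau w)) w.

End Defs.

From HB Require Import structures.
From mathcomp Require Import all_boot all_order all_algebra.
From mathcomp Require Import all_classical all_reals all_analysis.
From mathcomp Require Import measurable_realfun lra.
Import Order.TTheory GRing.Theory Num.Theory.
Local Open Scope classical_set_scope.
Local Open Scope ring_scope.

(* Both identities come from the minimality in (ii) and (iii) through a local
   perturbation. Let Y be a version of E[S_{t+1} | F_t]; the supermartingale
   property gives Y <= S_t. On the F_t-set where G_t < V_t and Y < S_t, replace
   S_t by Y: the result is still a nonnegative supermartingale (there its
   one-step condition holds with equality, elsewhere nothing changed) and still
   equals 1 on {V = G}, so minimality of S makes that set null. Likewise, if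
   Y := E[S_{t+1} V_{t+1} | F_t] < S_t V_t on an F_t-set inside
   {t < T_e, G_t < V_t}, lowering V_t there to g := max(G_t, V_t - S_t V_t + Y)
   < V_t keeps the stopped process S V a supermartingale, because Y <= S_t g <=
   S_t V_t when 0 <= S_t <= 1; this contradicts the minimality of V.
   Supermartingale properties are handled through the equivalent integral
   inequalities on F_s-sets, conditional expectations being Radon-Nikodym
   derivatives on the sub-sigma-algebra. *)

Lemma inT_leq {T s u} : (s <= u)%N -> inT T u -> inT T s.
Proof. by case: T => //= n su un; exact: leq_trans un. Qed.

Lemma ltT_inT {T t} : ltT t T -> inT T t.
Proof. by case: T => //= n /ltnW. Qed.

Lemma ltT_inTS {T t} : ltT t T -> inT T t.+1.
Proof. by case: T. Qed.

Lemma ltT_leq {e s t} : (s <= t)%N -> ltT t e -> ltT s e.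
Proof. by case: e => //= n st tn; exact: leq_ltn_trans tn. Qed.

Lemma ltTNleT e t : ltT t e <-> ~ leT e t.
Proof. by case: e => [n|] /=; [rewrite ltnNge; split=> /negP | split=> // _ []]. Qed.

Lemma tmin_id {t e} : ltT t e -> tmin t e = t.
Proof. by case: e => //= n /ltnW /minn_idPl. Qed.

Lemma tminS_id {t e} : ltT t e -> tmin t.+1 e = t.+1.
Proof. by case: e => //= n /minn_idPl. Qed.

Lemma tmin_eq {u t e} : ltT t e -> tmin u e = t -> u = t.
Proof.
case: e => //= n tn; rewrite /minn; case: ifP => // _ nt.
by move: tn; rewrite nt ltnn.
Qed.

Lemma normr_le_between {R : realDomainType} (a b c : R) :
  c <= a -> a <= b -> `|a| <= `|c| + `|b|.
Proof.
move=> ca ab; have := ler_norm b; have := ler_norm (- c); rewrite normrN.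
by have := normr_ge0 b; have := normr_ge0 c; rewrite ler_norml; lra.
Qed.

Lemma measurable_fun_asbool {d} {T : measurableType d} {D A : set T} :
  measurable D -> measurable A -> measurable_fun D (fun w => `[< A w >]).
Proof.
move=> mD mA; apply: (measurable_fun_bool true).
rewrite (_ : _ @^-1` _ = A); first exact: measurableI.
by apply/seteqP; split=> w /= /asboolP.
Qed.

Section eff_horizon.
Context {d : measure_display} {Omega : measurableType d} {R : realType}.
Variables (T : enat) (p : nat -> Omega -> R).

Lemma ltT_eff_horizon w t :
  ltT t (eff_horizon T p w) <-> ltT t T /\ (forall s, (s <= t)%N -> p s w <> 0).
Proof.
rewrite /eff_horizon; case: pselect => [h|h]; last first.
  split=> [tT|[]//]; split=> // s st ps0; apply: h; exists s.
  by apply/asboolP; split=> //; exact: ltT_leq st tT.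
case: ex_minnP => m /asboolP [mT pm0] m_min /=; split.
- move=> tm; split; first exact: ltT_leq (ltnW tm) mT.
  move=> s st ps0; have : (m <= s)%N.
    by apply/m_min/asboolP; split=> //; exact: ltT_leq (leq_trans st (ltnW tm)) mT.
  by rewrite leqNgt (leq_ltn_trans st tm).
- by move=> [tT tp]; rewrite ltnNge; apply/negP => mt; exact: tp m mt pm0.
Qed.

Lemma eff_horizon_ltT w t : ltT t (eff_horizon T p w) -> ltT t T.
Proof. by case/ltT_eff_horizon. Qed.

End eff_horizon.

Section sub_sigma_algebra.
Context {d : measure_display} {Omega : measurableType d} {R : realType}.
Context {G : set (set Omega)} (sG : sigma_algebra setT G).

Local Notation OmegaG := (g_sigma_algebraType G).

Lemma measurable_subE (A : set Omega) : measurable (A : set OmegaG) = G A.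
Proof. by rewrite measurable_g_measurableTypeE. Qed.

Lemma sigma_algebra_setI {A B : set Omega} : G A -> G B -> G (A `&` B).
Proof. by rewrite -!measurable_subE; exact: measurableI. Qed.

Lemma sigma_algebra_setC {A : set Omega} : G A -> G (~` A).
Proof. by rewrite -!measurable_subE; exact: measurableC. Qed.

Lemma FmeasP (X : Omega -> R) : Fmeas G X <-> measurable_fun [set: OmegaG] X.
Proof.
split=> mX.
  by move=> _ B mB; rewrite setTI measurable_subE; exact: mX.
by move=> B mB; rewrite -measurable_subE -[Z in measurable Z]setTI; exact: mX.
Qed.

Lemma Fmeas_onP (D : set Omega) (X : Omega -> R) :
  G D -> Fmeas_on G D X <-> measurable_fun (D : set OmegaG) X.
Proof.
move=> GD; split=> mX.
  by move=> _ B mB; rewrite measurable_subE; exact: mX.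
by move=> B mB; rewrite -measurable_subE; apply: mX; rewrite // measurable_subE.
Qed.

Lemma Fmeas_measurable {X : Omega -> R} :
  G `<=` measurable -> Fmeas G X -> measurable_fun setT X.
Proof. by move=> GM mX _ B mB; rewrite setTI; apply: GM; exact: mX. Qed.

End sub_sigma_algebra.

Section conditional_expectation.
Context {d : measure_display} {Omega : measurableType d} {R : realType}.
Variable P : probability Omega R.
Context {G : set (set Omega)} (sG : sigma_algebra setT G) (GM : G `<=` measurable).

Local Notation OmegaG := (g_sigma_algebraType G).

Definition id_sub : Omega -> OmegaG := id.

Lemma measurable_id_sub : measurable_fun setT id_sub.
Proof. by move=> _ A; rewrite setTI measurable_subE //; exact: GM. Qed.

HB.instance Definition _ :=
  isMeasurableFun.Build _ _ _ _ id_sub measurable_id_sub.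

Lemma induced_charge_dominates (f : Omega -> \bar R)
  (intf : P.-integrable setT f) : induced_charge intf `<< P.
Proof.
apply/null_content_dominatesP => A mA PA0; apply: null_set_integral => //.
exact: (measurable_funS measurableT (subsetT _) (measurable_int _ intf)).
Qed.

(* E[X | G] is the Radon-Nikodym derivative of A |-> E[X; A] with respect to P,
   both pushed forward along the identity into the sub-sigma-algebra G. *)
Lemma cond_exp_exists (X : Omega -> R) :
  P.-integrable setT (EFin \o X) -> exists Y, cond_exp_version P G X Y.
Proof.
move=> intX.
(* The charge instance of a pushforward takes the measurability of the map as
   an argument, which canonical-structure inference cannot supply. *)
pose nu := measure_function_pushforward__canonical__charge_Charge
  (induced_charge intX) measurable_id_sub.
pose mu : probability OmegaG R := distribution P id_sub.
have numu : nu `<< mu.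
  exact: dominates_pushforward measurable_id_sub (induced_charge_dominates _ intX).
pose f := Radon_Nikodym nu mu.
have intf : mu.-integrable setT f := Radon_Nikodym_integrable numu.
have mf : measurable_fun setT f by exact: measurable_int intf.
have intfP : P.-integrable setT (f \o id_sub).
  apply/integrableP; split; first exact: measurableT_comp mf measurable_id_sub.
  case/integrableP: intf => _; rewrite /mu /distribution.
  by rewrite (ge0_integral_pushforward measurable_id_sub) //=; exact: measurableT_comp.
have Ef : EFin \o (fine \o f) = f.
  by apply/funext => w /=; rewrite fineK // Radon_Nikodym_fin_num.
exists (fine \o f); split; [|split].
- by apply/(FmeasP sG); exact: measurableT_comp.
- by rewrite Ef.
- move=> A GA; transitivity (\int[P]_(w in A) f w)%E.
    by apply: eq_integral => w _; rewrite -Ef.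
  have mA : measurable (A : set OmegaG) by rewrite measurable_subE.
  rewrite -[RHS]/(nu A) (Radon_Nikodym_integral numu mA) integral_pushforward //.
  by apply: (integrableS measurableT _ (subsetT _) intfP); exact: GM.
Qed.

End conditional_expectation.

Section integral_comparison.
Context {d : measure_display} {Omega : measurableType d} {R : realType}.
Variable P : probability Omega R.
Local Open Scope ereal_scope.

Lemma ae_le_integral (f g : Omega -> R) (B : set Omega) : measurable B ->
  P.-integrable setT (EFin \o f) -> P.-integrable setT (EFin \o g) ->
  {ae P, forall w, (f w <= g w)%R} ->
  \int[P]_(w in B) (f w)%:E <= \int[P]_(w in B) (g w)%:E.
Proof.
move=> mB intf intg fg.
have intfB := integrableS measurableT mB (subsetT _) intf.
have intgB := integrableS measurableT mB (subsetT _) intg.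
have mf : measurable_fun setT f by apply/measurable_EFinP; case/integrableP: intf.
have mg : measurable_fun setT g by apply/measurable_EFinP; case/integrableP: intg.
have : 0 <= \int[P]_(w in B) ((g w)%:E - (f w)%:E).
  rewrite (ae_eq_integral (fun w => (Num.max (g w - f w) 0)%:E)) //.
  - by apply: integral_ge0 => w _; rewrite lee_fin le_max lexx orbT.
  - by apply/measurable_EFinP/measurable_funTS; exact: measurable_funB.
  - apply/measurable_EFinP/measurable_funTS.
    by apply: measurable_maxr => //; exact: measurable_funB.
  - apply: filterS fg => w fgw _ /=.
    by rewrite -EFinB; congr EFin; apply/esym/max_idPl; rewrite subr_ge0.
rewrite integralB_EFin // sube_ge0 //.
by rewrite integrable_fin_num.
Qed.

Section cond_exp_comparison.
Context {G : set (set Omega)} (sG : sigma_algebra setT G) (GM : G `<=` measurable).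

Lemma integral_le_of_cond_exp_le {X W : Omega -> R} :
  P.-integrable setT (EFin \o X) -> P.-integrable setT (EFin \o W) ->
  (forall Z, cond_exp_version P G X Z -> {ae P, forall w, (Z w <= W w)%R}) ->
  forall B, G B -> \int[P]_(w in B) (X w)%:E <= \int[P]_(w in B) (W w)%:E.
Proof.
move=> intX intW ZW B GB; have [Z hZ] := cond_exp_exists P sG GM _ intX.
have [_ [intZ EZ]] := hZ; rewrite -(EZ B GB).
by apply: ae_le_integral => //; [exact: GM | exact: ZW].
Qed.

Lemma ae_le_of_integral_le {Z W : Omega -> R} {B0 : set Omega} :
  Fmeas G Z -> Fmeas G W ->
  P.-integrable setT (EFin \o Z) -> P.-integrable setT (EFin \o W) -> G B0 ->
  (forall B, G B -> B `<=` B0 ->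
     \int[P]_(w in B) (Z w)%:E <= \int[P]_(w in B) (W w)%:E) ->
  {ae P, forall w, B0 w -> (Z w <= W w)%R}.
Proof.
move=> GZ GW intZ intW GB0 ZW.
pose C := B0 `&` [set w | (W w < Z w)%R].
have GC : G C.
  have mB0 : measurable (B0 : set (g_sigma_algebraType G)) by rewrite measurable_subE.
  have mWZ : measurable_fun (B0 : set (g_sigma_algebraType G)) (fun w => (W w < Z w)%R).
    by apply: measurable_fun_ltr; apply/measurable_funTS/(FmeasP sG).
  by rewrite -(measurable_subE sG); apply: mWZ.
have mC := GM _ GC.
have mZW : measurable_fun C (fun w => (Z w - W w)%:E).
  apply/measurable_EFinP/measurable_funTS.
  by apply: measurable_funB; exact: Fmeas_measurable GM _.
have : \int[P]_(w in C) `|(Z w - W w)%:E| = 0.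
  apply/eqP; rewrite eq_le integral_ge0 ?andbT; last by move=> w _; exact: abse_ge0.
  rewrite (eq_integral (fun w => (Z w)%:E - (W w)%:E)); last first.
    by move=> w /set_mem [_ /= WZ]; rewrite -EFinB /= ger0_norm // subr_ge0 ltW.
  rewrite integralB_EFin ?sube_le0 ?ZW //; first exact: subIsetl.
  - exact: integrableS measurableT mC (subsetT _) intZ.
  - exact: integrableS measurableT mC (subsetT _) intW.
move=> /(ae_eq_integral_abs P mC mZW); apply: filterS => w CZW B0w.
rewrite leNgt; apply/negP => WZ; have /= := CZW (conj B0w WZ).
by move=> [] /eqP; rewrite subr_eq0 => /eqP ZW'; move: WZ; rewrite ZW' ltxx.
Qed.

End cond_exp_comparison.

Lemma integral_setI_setC {f : Omega -> R} {A B : set Omega} :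
  measurable A -> measurable B -> measurable_fun setT f ->
  \int[P]_(w in B) (f w)%:E =
  \int[P]_(w in B `&` A) (f w)%:E + \int[P]_(w in B `&` ~` A) (f w)%:E.
Proof.
move=> mA mB mf; rewrite -integral_setU //.
- by rewrite -setIUr setUv setIT.
- exact: measurableI.
- by apply: measurableI => //; exact: measurableC.
- by apply/measurable_EFinP; exact: measurable_funTS.
- by apply/disj_setPS => w [[_ Aw] [_ nAw]].
Qed.

End integral_comparison.

Section filtration.
Context {d : measure_display} {Omega : measurableType d}.
Context {T : enat} {F : nat -> set (set Omega)} (hF : filtration T F).

Lemma filtration_sigma_algebra {u} : inT T u -> sigma_algebra setT (F u).
Proof. by move=> /(hF.1 u) []. Qed.

Lemma filtration_measurable {u} : inT T u -> F u `<=` measurable.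
Proof. by move=> /(hF.1 u) []. Qed.

Lemma filtrationS {s u} : (s <= u)%N -> inT T u -> F s `<=` F u.
Proof. exact: hF.2.1. Qed.

End filtration.

Section supermartingale.
Context {d : measure_display} {Omega : measurableType d} {R : realType}.
Context {P : probability Omega R} {T : enat} {F : nat -> set (set Omega)}.
Hypothesis hF : filtration T F.
Local Open Scope ereal_scope.

Let sigmaF {u} := @filtration_sigma_algebra _ _ _ _ hF u.
Let FM {u} := @filtration_measurable _ _ _ _ hF u.

Lemma supermart_integral_le {X : nat -> Omega -> R} {s u B} :
  supermart P T F X -> (s <= u)%N -> inT T u -> F s B ->
  \int[P]_(w in B) (X u w)%:E <= \int[P]_(w in B) (X s w)%:E.
Proof.
move=> [hX XZ] su hu; have hs := inT_leq su hu.
exact: (integral_le_of_cond_exp_le P (sigmaF hs) (FM hs) (hX u hu).2 (hX s hs).2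
  (XZ s u su hu)).
Qed.

Lemma supermart_ext_integral_le {X : nat -> Omega -> R} {Xinf s B} :
  supermart_ext P T F X Xinf -> T = None -> F s B ->
  \int[P]_(w in B) (Xinf w)%:E <= \int[P]_(w in B) (X s w)%:E.
Proof.
move=> [[hX _] hinf] TN; have [_ [iXinf XZ]] := hinf TN.
have hs : inT T s by rewrite TN.
exact: (integral_le_of_cond_exp_le P (sigmaF hs) (FM hs) iXinf (hX s hs).2 (XZ s)).
Qed.

Lemma cond_exp_le_of_integral_le {s} {X Z W : Omega -> R} : inT T s ->
  Fmeas (F s) W -> P.-integrable setT (EFin \o W) ->
  (forall B, F s B -> \int[P]_(w in B) (X w)%:E <= \int[P]_(w in B) (W w)%:E) ->
  cond_exp_version P (F s) X Z -> {ae P, forall w, (Z w <= W w)%R}.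
Proof.
move=> hs mW iW XW [mZ [iZ EZ]].
have FT : F s setT by rewrite -(measurable_subE (sigmaF hs)).
have ZW : {ae P, forall w, setT w -> (Z w <= W w)%R}.
  apply: (ae_le_of_integral_le P (sigmaF hs) (FM hs) mZ mW iZ iW FT) => B FB _.
  by rewrite EZ //; exact: XW.
by apply: filterS ZW => w; apply.
Qed.

Lemma supermartI (X : nat -> Omega -> R) :
  (forall u, inT T u -> Fmeas (F u) (X u) /\ P.-integrable setT (EFin \o X u)) ->
  (forall s u B, (s <= u)%N -> inT T u -> F s B ->
     \int[P]_(w in B) (X u w)%:E <= \int[P]_(w in B) (X s w)%:E) ->
  supermart P T F X.
Proof.
move=> hX XX; split=> // s u su hu Z; have hs := inT_leq su hu.
by apply: (cond_exp_le_of_integral_le hs (hX s hs).1 (hX s hs).2) => B; exact: XX.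
Qed.

Section patch.
Context {X : nat -> Omega -> R} {t : nat} {A : set Omega} {Z Y Xt : Omega -> R}.
Hypotheses (hX : supermart P T F X) (htT : ltT t T) (FA : F t A).
Hypotheses (hY : cond_exp_version P (F t) Z Y) (ZX : forall w, A w -> Z w = X t.+1 w).
Hypotheses (mXt : Fmeas (F t) Xt) (Y_le_Xt : forall {w}, A w -> (Y w <= Xt w)%R)
  (Xt_le : forall w, (Xt w <= X t w)%R) (Xt_out : forall w, ~ A w -> Xt w = X t w).

Let ht := ltT_inT htT.
Let htS := ltT_inTS htT.

Lemma integrable_patch : P.-integrable setT (EFin \o Xt).
Proof.
have iXt := (hX.1 t ht).2; have [_ [iY _]] := hY.
apply: (le_integrable measurableT _ _ (integrableD measurableT
  (integrable_abse iY) (integrable_abse iXt))).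
  exact/measurable_EFinP/(Fmeas_measurable (FM ht)).
move=> w _ /=; rewrite lee_fin [leRHS]ger0_norm ?addr_ge0 //.
have [Aw|nAw] := pselect (A w).
  exact: normr_le_between (Y_le_Xt Aw) (Xt_le w).
by rewrite Xt_out // lerDr.
Qed.

(* Split B along A: on A, X_{t+1} integrates like Y <= Xt; off A, Xt = X_t. *)
Lemma integral_le_patch (W : Omega -> R) : P.-integrable setT (EFin \o W) ->
  (forall B, F t B -> \int[P]_(w in B) (W w)%:E <= \int[P]_(w in B) (X t w)%:E) ->
  (forall B, F t.+1 B -> \int[P]_(w in B) (W w)%:E <= \int[P]_(w in B) (X t.+1 w)%:E) ->
  forall B, F t B -> \int[P]_(w in B) (W w)%:E <= \int[P]_(w in B) (Xt w)%:E.
Proof.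
move=> iW W_le_Xt W_le_XtS B FB.
have [mY [iY EY]] := hY.
have FBA := sigma_algebra_setI (sigmaF ht) FB FA.
have FBnA := sigma_algebra_setI (sigmaF ht) FB (sigma_algebra_setC (sigmaF ht) FA).
have mB := FM ht _ FB; have mA := FM ht _ FA; have mBA := FM ht _ FBA.
have mW : measurable_fun setT W by apply/measurable_EFinP; case/integrableP: iW.
rewrite (integral_setI_setC P mA mB mW).
rewrite (integral_setI_setC P mA mB (Fmeas_measurable (FM ht) mXt)).
apply: leeD.
- apply: (le_trans (W_le_XtS _ (filtrationS hF (leqnSn t) htS _ FBA))).
  rewrite (eq_integral (fun w => (Z w)%:E)); last by move=> w /set_mem [_ /ZX ->].
  rewrite -EY //.
  apply: le_integral => //.
  + exact: integrableS measurableT mBA (subsetT _) iY.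
  + exact: integrableS measurableT mBA (subsetT _) integrable_patch.
  + by move=> w /set_mem [_ Aw]; rewrite lee_fin Y_le_Xt.
- apply: (le_trans (W_le_Xt _ FBnA)); rewrite le_eqVlt; apply/orP; left; apply/eqP.
  by apply: eq_integral => w /set_mem [_ nAw]; rewrite Xt_out.
Qed.

Lemma supermart_patch : supermart P T F [eta X with t |-> Xt].
Proof.
have [hXm _] := hX.
apply: supermartI => [u hu|s u B su hu FB] /=.
  by case: eqP => [->|_]; [split; [exact: mXt | exact: integrable_patch] | exact: hXm].
have hs := inT_leq su hu.
case: (eqVneq u t) => [ut|ut]; case: (eqVneq s t) => [st|st].
- by [].
- subst u; apply: (le_trans _ (supermart_integral_le hX su hu FB)).
  have mB := FM hs _ FB; apply: le_integral => //.
  + exact: integrableS measurableT mB (subsetT _) integrable_patch.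
  + exact: integrableS measurableT mB (subsetT _) (hXm t hu).2.
  + by move=> w _; rewrite lee_fin.
- subst s; have tu : (t < u)%N by rewrite ltn_neqAle eq_sym ut su.
  apply: integral_le_patch FB; first exact: (hXm u hu).2.
  + by move=> C FC; exact: supermart_integral_le hX su hu FC.
  + by move=> C FC; exact: supermart_integral_le hX tu hu FC.
- exact: supermart_integral_le hX su hu FB.
Qed.

Lemma supermart_ext_patch {Xinf} :
  supermart_ext P T F X Xinf -> supermart_ext P T F [eta X with t |-> Xt] Xinf.
Proof.
move=> hXinf; split; first exact: supermart_patch.
move=> TN; have [mXinf [iXinf XinfZ]] := hXinf.2 TN; split=> //; split=> // s.
have [->|st] := eqVneq s t; rewrite /= ?eqxx ?(negPf st); last exact: XinfZ.
move=> Z0 hZ0; apply: (cond_exp_le_of_integral_le ht mXt integrable_patch _ hZ0) => B FB.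
by apply: integral_le_patch FB => // C FC; exact: supermart_ext_integral_le hXinf TN FC.
Qed.

End patch.

End supermartingale.

Section optimal_stopping.
Context {d : measure_display} {Omega : measurableType d} {R : realType}.
Context {P : probability Omega R} {T : enat} {F : nat -> set (set Omega)}
  {sigma : Omega -> enat} {G V S : nat -> Omega -> R}.
Hypotheses (hF : filtration T F) (hsigma : stopping_time T F sigma).

Local Notation D := (Dset sigma).
Local Notation OmegaF t := (g_sigma_algebraType (F t)).

Hypotheses (mG : forall t, inT T t -> Fmeas_on (F t) (D t) (G t))
  (mV : forall t, inT T t -> Fmeas_on (F t) (D t) (V t))
  (S_unit : forall t, inT T t -> {ae P, forall w, D t w -> 0 < S t w <= 1}).

Let sigmaF {u} := @filtration_sigma_algebra _ _ _ _ hF u.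
Let FM {u} := @filtration_measurable _ _ _ _ hF u.

Lemma Dset_in_filtration {t} : inT T t -> F t (D t).
Proof.
move=> ht; rewrite (_ : D t = ~` [set w | leT (sigma w) t]).
  by have := sigma_algebra_setC (sigmaF ht) (hsigma t ht); apply.
by apply/funext => w; apply/propext; exact: ltTNleT.
Qed.

Let measurable_D {t} (ht : inT T t) : measurable (D t : set (OmegaF t)).
Proof. by rewrite (measurable_subE (sigmaF ht)); exact: Dset_in_filtration ht. Qed.

Let measurable_on_D {t} (ht : inT T t) {X : Omega -> R} :
  Fmeas_on (F t) (D t) X -> measurable_fun (D t : set (OmegaF t)) X.
Proof. exact: (Fmeas_onP (sigmaF ht) _ _ (Dset_in_filtration ht)).1. Qed.

Let Fmeas_measurable_on_D {t} (ht : inT T t) {X : Omega -> R} :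
  Fmeas (F t) X -> measurable_fun (D t : set (OmegaF t)) X.
Proof. by move=> /(FmeasP (sigmaF ht)); exact: measurable_funTS. Qed.

Section S_martingale.
Context {Sinf : Omega -> R}.
Hypotheses (S_ge0 : forall t, inT T t -> {ae P, forall w, 0 <= S t w})
  (Sinf_ge0 : T = None -> {ae P, forall w, 0 <= Sinf w})
  (S_super : supermart_ext P T F S Sinf)
  (S_one : forall t, inT T t -> {ae P, forall w, D t w -> V t w = G t w -> S t w = 1})
  (Sinf_one : T = None -> {ae P, forall w, Sinf w = \1_[set w | sigma w = None] w}).
Hypothesis S_min : forall (Y : nat -> Omega -> R) (Yinf : Omega -> R),
  (forall t, inT T t -> {ae P, forall w, 0 <= Y t w}) ->
  (T = None -> {ae P, forall w, 0 <= Yinf w}) ->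
  supermart_ext P T F Y Yinf ->
  (forall t, inT T t -> {ae P, forall w, D t w -> V t w = G t w -> Y t w = 1}) ->
  (T = None -> {ae P, forall w, Yinf w = \1_[set w | sigma w = None] w}) ->
  (forall t, inT T t -> {ae P, forall w, S t w <= Y t w}) /\
  (T = None -> {ae P, forall w, Sinf w <= Yinf w}).

Section lower_S.
Context {t : nat} {Y : Omega -> R}.
Hypotheses (htT : ltT t T) (hY : cond_exp_version P (F t) (S t.+1) Y).

Let ht := ltT_inT htT.
Let A := D t `&` [set w | (G t w < V t w) && (Y w < S t w) && (0 < S t w)].
Let St w := if `[< A w >] then Num.max (Y w) 0 else S t w.

Let FA : F t A.
Proof.
have mGD := measurable_on_D ht (mG t ht); have mVD := measurable_on_D ht (mV t ht).
have mYD := Fmeas_measurable_on_D ht hY.1.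
have mSD := Fmeas_measurable_on_D ht (S_super.1.1 t ht).1.
rewrite -(measurable_subE (sigmaF ht)).
apply: (measurable_and _ _ (measurable_D ht)) => //.
  by apply: measurable_and; exact: measurable_fun_ltr.
exact: measurable_fun_ltr.
Qed.

Let mA : measurable (A : set (OmegaF t)).
Proof. by rewrite (measurable_subE (sigmaF ht)). Qed.

Let lowered_super : supermart_ext P T F [eta S with t |-> St] Sinf.
Proof.
have mSt : Fmeas (F t) St.
  apply/(FmeasP (sigmaF ht)); apply: measurable_fun_ifT.
  - exact: measurable_fun_asbool measurableT mA.
  - by apply: measurable_maxr => //; exact/(FmeasP (sigmaF ht))/hY.1.
  - exact/(FmeasP (sigmaF ht))/(S_super.1.1 t ht).1.
apply: (supermart_ext_patch hF S_super.1 htT FA hY) => //.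
- by move=> w Aw; rewrite /St asboolT // le_max lexx.
- move=> w; rewrite /St; case: asboolP => // -[_ /andP[/andP[_ YS] S0]].
  by rewrite ge_max !ltW.
- by move=> w nA; rewrite /St asboolF.
Qed.

Let lowered_ge0 u : inT T u -> {ae P, forall w, 0 <= [eta S with t |-> St] u w}.
Proof.
move=> hu /=; case: eqP => _; last exact: S_ge0.
apply: filterS (S_ge0 t ht) => w S0; rewrite /St; case: asboolP => // _.
by rewrite le_max lexx orbT.
Qed.

Let lowered_one u : inT T u ->
  {ae P, forall w, D u w -> V u w = G u w -> [eta S with t |-> St] u w = 1}.
Proof.
move=> hu /=; case: eqP => [->|_]; last exact: S_one.
apply: filterS (S_one t ht) => w S1 Dw VG; rewrite /St asboolF; first exact: S1.
by case=> _ /andP[/andP[]]; rewrite VG ltxx.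
Qed.

Lemma S_martingale_on_continuation :
  {ae P, forall w, D t w -> G t w < V t w -> S t w = Y w}.
Proof.
have Y_le_S : {ae P, forall w, Y w <= S t w}.
  exact: S_super.1.2 t t.+1 (leqnSn t) (ltT_inTS htT) Y hY.
have [S_le _] := S_min _ _ lowered_ge0 Sinf_ge0 lowered_super lowered_one Sinf_one.
have := S_le t ht; rewrite /= eqxx => S_le_St.
apply: filterS3 S_le_St Y_le_S (S_unit t ht) => w SSt YS Spos Dw GV.
have /andP[S0 _] := Spos Dw.
apply/eqP; rewrite eq_le YS andbT leNgt; apply/negP => YltS.
have Aw : A w by split=> //=; rewrite GV YltS S0.
by move: SSt; rewrite /St asboolT // leNgt gt_max YltS S0.
Qed.

End lower_S.
End S_martingale.

Section SV_martingale.
Context {p : nat -> Omega -> R}.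
Hypotheses (mp : forall s, ltT s T -> Fmeas (F s) (p s))
  (mS : forall t, inT T t -> Fmeas (F t) (S t))
  (V_ge_G : forall t, inT T t -> {ae P, forall w, D t w -> G t w <= V t w})
  (SV_super : supermart P T F (stopped (fun t w => S t w * V t w) (eff_horizon T p))).
Hypothesis V_min : forall W : nat -> Omega -> R,
  (forall t, inT T t -> Fmeas_on (F t) (D t) (W t)) ->
  (forall t, inT T t -> {ae P, forall w, D t w -> G t w <= W t w}) ->
  supermart P T F (stopped (fun t w => S t w * W t w) (eff_horizon T p)) ->
  forall t, inT T t -> {ae P, forall w, D t w -> V t w <= W t w}.

Local Notation Te := (eff_horizon T p).
Local Notation X := (stopped (fun t w => S t w * V t w) Te).

Lemma eff_horizon_in_filtration {t} : ltT t T -> F t [set w | ltT t (Te w)].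
Proof.
move=> htT; have ht := ltT_inT htT.
rewrite (_ : [set w | _] = \bigcap_(s in [set s | (s <= t)%N]) ~` (p s @^-1` [set 0])).
  rewrite -(measurable_subE (sigmaF ht)); apply: bigcap_measurableType => s st.
  apply: measurableC; rewrite (measurable_subE (sigmaF ht)).
  apply: (filtrationS hF st ht); apply: mp (ltT_leq st htT) _ (measurable_set1 0).
apply/seteqP; split=> w.
- by move=> /ltT_eff_horizon [_ p0] s /= st; exact: p0.
- by move=> p0; apply/ltT_eff_horizon; split=> // s st; exact: p0.
Qed.

Lemma SV_cond_exp_le {t Y} : ltT t T ->
  cond_exp_version P (F t) (fun w => S t.+1 w * V t.+1 w) Y ->
  {ae P, forall w, ltT t (Te w) -> Y w <= S t w * V t w}.
Proof.
move=> htT [mY [iY EY]]; have ht := ltT_inT htT.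
have Y_le_X : {ae P, forall w, ltT t (Te w) -> Y w <= X t w}.
  apply: (ae_le_of_integral_le P (sigmaF ht) (FM ht) mY (SV_super.1 t ht).1 iY
    (SV_super.1 t ht).2 (eff_horizon_in_filtration htT)) => B FB BE.
  rewrite EY // (eq_integral (fun w => (X t.+1 w)%:E)); last first.
    by move=> w /set_mem /BE tTe; rewrite /stopped tminS_id.
  exact: (supermart_integral_le hF SV_super (leqnSn t) (ltT_inTS htT) FB).
by apply: filterS Y_le_X => w + tTe; rewrite /stopped tmin_id //; apply.
Qed.

Section lower_V.
Context {t : nat} {Y : Omega -> R}.
Hypotheses (htT : ltT t T)
  (hY : cond_exp_version P (F t) (fun w => S t.+1 w * V t.+1 w) Y).

Let ht := ltT_inT htT.
Let E := [set w | ltT t (Te w)].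
Let A := (D t `&`
  [set w | [&& G t w < V t w, Y w < S t w * V t w, 0 <= S t w & S t w <= 1]]) `&` E.
Let g w := Num.max (G t w) (V t w - S t w * V t w + Y w).
Let Vt w := if `[< A w >] then g w else V t w.
Let Xt w := if `[< A w >] then S t w * g w else X t w.

Let mGD := measurable_on_D ht (mG t ht).
Let mVD := measurable_on_D ht (mV t ht).
Let mYD := Fmeas_measurable_on_D ht hY.1.
Let mSD := Fmeas_measurable_on_D ht (mS t ht).

Let FA : F t A.
Proof.
apply: (sigma_algebra_setI (sigmaF ht) _ (eff_horizon_in_filtration htT)).
rewrite -(measurable_subE (sigmaF ht)).
apply: (measurable_and _ _ (measurable_D ht)) => //.
  exact: measurable_fun_ltr.
apply: measurable_and; first exact: measurable_fun_ltr mYD (measurable_funM mSD mVD).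
by apply: measurable_and; apply: measurable_fun_ler.
Qed.

Let mA : measurable (A : set (OmegaF t)).
Proof. by rewrite (measurable_subE (sigmaF ht)). Qed.

Let mg : measurable_fun (D t : set (OmegaF t)) g :=
  measurable_maxr mGD
    (measurable_funD (measurable_funB mVD (measurable_funM mSD mVD)) mYD).

Let g_lt_V w : A w -> g w < V t w.
Proof. by move=> [[_ /and4P[GV YSV _ _]] _]; rewrite gt_max GV /=; lra. Qed.

Let Y_le_Sg w : A w -> Y w <= S t w * g w.
Proof.
move=> [[_ /and4P[_ YSV S0 S1]] _].
have /(ler_wpM2l S0) : V t w - S t w * V t w + Y w <= g w by rewrite le_max lexx orbT.
by apply: le_trans; nra.
Qed.

Let stopped_lowered :
  stopped (fun u w => S u w * [eta V with t |-> Vt] u w) Te = [eta X with t |-> Xt].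
Proof.
apply/funext => u; apply/funext => w; rewrite /stopped /=.
have [Aw|nAw] := pselect (A w); last first.
  have Vt_out m : (if m == t then Vt else V m) w = V m w.
    by case: eqP => // ->; rewrite /Vt asboolF.
  by rewrite Vt_out; case: eqP => // ->; rewrite /Xt asboolF.
have [_ Ew] := Aw; case: (eqVneq u t) => [->|ut].
  by rewrite (tmin_id Ew) eqxx /Vt /Xt !asboolT.
by case: eqP => // /(tmin_eq Ew) ut'; move: ut; rewrite ut' eqxx.
Qed.

Let lowered_super :
  supermart P T F (stopped (fun u w => S u w * [eta V with t |-> Vt] u w) Te).
Proof.
have mXt : Fmeas (F t) Xt.
  apply/(FmeasP (sigmaF ht)); apply: measurable_fun_if => //.
  - exact: measurable_fun_asbool measurableT mA.
  - apply: (measurable_funS (measurable_D ht)); last exact: measurable_funM mSD mg.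
    by move=> w [_ /asboolP [[]]].
  - exact/measurable_funTS/(FmeasP (sigmaF ht))/(SV_super.1 t ht).1.
rewrite stopped_lowered; apply: (supermart_patch hF SV_super htT FA hY) => //.
- by move=> w [_ Ew]; rewrite /stopped tminS_id.
- by move=> w Aw; rewrite /Xt asboolT // Y_le_Sg.
- move=> w; rewrite /Xt; case: asboolP => // Aw.
  have [[_ /and4P[_ _ S0 _]] Ew] := Aw.
  by rewrite /stopped tmin_id // ler_wpM2l // ltW // g_lt_V.
- by move=> w nA; rewrite /Xt asboolF.
Qed.

Let lowered_measurable u : inT T u -> Fmeas_on (F u) (D u) ([eta V with t |-> Vt] u).
Proof.
move=> hu /=; case: eqP => [->|_]; last exact: mV.
apply/(Fmeas_onP (sigmaF ht) _ _ (Dset_in_filtration ht)).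
apply: (measurable_fun_if (measurable_D ht) (measurable_fun_asbool (measurable_D ht) mA)).
  by apply: (measurable_funS (measurable_D ht) _ mg); exact: subIsetl.
by apply: (measurable_funS (measurable_D ht) _ mVD); exact: subIsetl.
Qed.

Let lowered_ge_G u : inT T u ->
  {ae P, forall w, D u w -> G u w <= [eta V with t |-> Vt] u w}.
Proof.
move=> hu /=; case: eqP => [->|_]; last exact: V_ge_G.
apply: filterS (V_ge_G t ht) => w GV Dw; rewrite /Vt.
by case: asboolP => _; [rewrite le_max lexx | exact: GV].
Qed.

Lemma SV_martingale_on_continuation :
  {ae P, forall w, ltT t (Te w) -> D t w -> G t w < V t w -> S t w * V t w = Y w}.
Proof.
have := V_min _ lowered_measurable lowered_ge_G lowered_super t ht; rewrite /= eqxx.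
move=> V_le_Vt; apply: filterS3 V_le_Vt (SV_cond_exp_le htT hY) (S_unit t ht).
move=> w VVt YSV Spos Ew Dw GV; have /andP[/ltW S0 S1] := Spos Dw.
apply/eqP; rewrite eq_le (YSV Ew) andbT leNgt; apply/negP => YltSV.
have Aw : A w by split=> //; split=> //=; rewrite GV YltSV S0 S1.
by move: (VVt Dw); rewrite /Vt asboolT // leNgt g_lt_V.
Qed.

End lower_V.
End SV_martingale.

End optimal_stopping.

Theorem lemma6p2 (d : measure_display) (Omega : measurableType d) (R : realType)
  (P : probability Omega R) (T : enat) (F : nat -> set (set Omega))
  (sigma : Omega -> enat) (G : nat -> Omega -> R)
  (p : nat -> Omega -> R)
  (V : nat -> Omega -> R) (S : nat -> Omega -> R) (Sinf : Omega -> R) :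
  (* standing assumptions *)
  filtration T F ->
  stopping_time T F sigma ->
  P [set w | ltT 0 (sigma w)] = 1%E ->
  (forall t, inT T t -> Fmeas_on (F t) (Dset sigma t) (G t)) ->
  (\int[P]_w ereal_sup [set (`|G t w| * \1_(Dset sigma t) w)%:E
                       | t in [set t | inT T t]] < +oo)%E ->
  (* p t is a version of P(D_{t+1} | F_t); T_e is the effective horizon *)
  (forall t, ltT t T ->
     cond_exp_version P (F t) (\1_(Dset sigma t.+1)) (p t)) ->
  let Te := eff_horizon T p in
  let D := Dset sigma in
  (* (i) *)
  (forall t, inT T t ->
     {ae P, forall w, (D t w -> 0 < S t w <= 1) /\ (~ D t w -> S t w = 0)
                      /\ (D t w -> ~ ltT t (Te w) -> V t w = G t w)}) ->
  (* (ii) *)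
  ((forall t, inT T t -> Fmeas_on (F t) (D t) (V t)) /\
   (forall t, inT T t -> {ae P, forall w, D t w -> G t w <= V t w}) /\
   supermart P T F (stopped (fun t w => S t w * V t w) Te)) ->
  (forall W : nat -> Omega -> R,
     (forall t, inT T t -> Fmeas_on (F t) (D t) (W t)) ->
     (forall t, inT T t -> {ae P, forall w, D t w -> G t w <= W t w}) ->
     supermart P T F (stopped (fun t w => S t w * W t w) Te) ->
     forall t, inT T t -> {ae P, forall w, D t w -> V t w <= W t w}) ->
  (* (iii) *)
  ((forall t, inT T t -> {ae P, forall w, 0 <= S t w}) /\
   (T = None -> {ae P, forall w, 0 <= Sinf w}) /\
   supermart_ext P T F S Sinf /\
   (forall t, inT T t -> {ae P, forall w, D t w -> V t w = G t w -> S t w = 1}) /\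
   (T = None -> {ae P, forall w, Sinf w = \1_[set w | sigma w = None] w})) ->
  (forall (Y : nat -> Omega -> R) (Yinf : Omega -> R),
     (forall t, inT T t -> {ae P, forall w, 0 <= Y t w}) ->
     (T = None -> {ae P, forall w, 0 <= Yinf w}) ->
     supermart_ext P T F Y Yinf ->
     (forall t, inT T t -> {ae P, forall w, D t w -> V t w = G t w -> Y t w = 1}) ->
     (T = None -> {ae P, forall w, Yinf w = \1_[set w | sigma w = None] w}) ->
     (forall t, inT T t -> {ae P, forall w, S t w <= Y t w}) /\
     (T = None -> {ae P, forall w, Sinf w <= Yinf w})) ->
  (* conclusion *)
  forall t, inT T t ->
    (forall Y, cond_exp_version P (F t) (S t.+1) Y ->
       {ae P, forall w, ltT t (Te w) -> D t w -> G t w < V t w -> S t w = Y w}) /\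
    (forall Y, cond_exp_version P (F t) (fun w => S t.+1 w * V t.+1 w) Y ->
       {ae P, forall w, ltT t (Te w) -> D t w -> G t w < V t w ->
                        S t w * V t w = Y w}).
Proof.
move=> hF hsigma _ mG _ hp Te D hi [mV [V_ge_G SV_super]] V_min
  [S_ge0 [Sinf_ge0 [S_super [S_one Sinf_one]]]] S_min t ht.
have [htT|ntT] := pselect (ltT t T); last first.
  by split=> Y _; apply: aeW => w /eff_horizon_ltT.
have S_unit u : inT T u -> {ae P, forall w, D u w -> 0 < S u w <= 1}.
  by move=> hu; apply: filterS (hi u hu) => w [].
have mp s : ltT s T -> Fmeas (F s) (p s) by move=> /hp [].
have mS u : inT T u -> Fmeas (F u) (S u) by move=> /(S_super.1.1 u) [].
split=> Y hY.
- apply: filterS (S_martingale_on_continuation hF hsigma mG mV S_unit S_ge0 Sinf_ge0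
    S_super S_one Sinf_one S_min htT hY) => w SY _; exact: SY.
- exact: (SV_martingale_on_continuation hF hsigma mG mV S_unit mp mS V_ge_G SV_super
    V_min htT hY).
Qed.
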